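(* Let $n \geq 0$ be an integer and consider Nim on the hypercube $Q_{2n+1}$ in which every edge has weight $1$, with the playing piece $\Delta$ starting at the vertex $\emptyset$. Then the first player $P_1$ has a strategy which guarantees that, throughout the game, $\Delta$ only ever lies on vertices at levels $\emptyset$, $1$ and $2$, i.e. on vertices whose labelling subset $X \subseteq \{1,\dots,2n+1\}$ has $|X| \leq 2$.
   Context: Nim on a graph: two players agree on a finite simple undirected graph $G$ whose edges carry positive integer weights, and a starting vertex on which a playing piece $\Delta$ is placed. Players $P_1$ (who moves first) and $P_2$ alternate. On a turn, the player chooses an edge of positive weight incident with the vertex currently holding $\Delta$, lowers that edge's weight by a positive integer amount, and moves $\Delta$ to the other endpoint of that edge. Edges of weight $0$ are no longer playable. A player who cannot move (no playable edge is incident with $\Delta$) loses. With unit weight (every edge has weight $1$), each edge can be traversed at most once in total. The hypercube $Q_m$ has as vertices the subsets $X \subseteq \{1,\dots,m\}$ (equivalently binary $m$-tuples), two vertices being adjacent iff they differ in exactly one element; the level of vertex $X$ is $|X|$, and $\emptyset$ is the empty set. *)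

From mathcomp Require Import all_boot.
Set Implicit Arguments. Unset Strict Implicit. Unset Printing Implicit Defensive.

(* Vertices of Q_m: subsets of {0,..,m-1} (i.e. of {1,..,m} up to relabelling). *)
Definition vertex (m : nat) := {set 'I_m}.

Definition hadj (m : nat) (X Y : vertex m) : bool :=
  #|(X :\: Y) :|: (Y :\: X)| == 1.

Definition hedge (m : nat) (X Y : vertex m) : {set vertex m} := [set X; Y].

(* A play is recorded as the sequence t of vertices successively occupied by
   the piece after each move; the piece starts at the empty set.  With unit
   weights a move traverses an edge incident to the current vertex that has
   never been traversed before (in either direction). *)
Definition legal_play (m : nat) (t : seq (vertex m)) : bool :=
  path (@hadj m) set0 t && uniq (pairmap (@hedge m) set0 t).

Definition strategy (m : nat) := seq (vertex m) -> vertex m.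

(* P1 moves when an even number of moves has been made. The strategy must
   prescribe a legal move whenever P1 has some legal move. *)
Definition valid_strategy (m : nat) (s : strategy m) : Prop :=
  forall t : seq (vertex m), legal_play t -> ~~ odd (size t) ->
    (exists w, legal_play (rcons t w)) -> legal_play (rcons t (s t)).

Definition follows (m : nat) (s : strategy m) (t : seq (vertex m)) : Prop :=
  forall i, i < size t -> ~~ odd i -> nth set0 t i = s (take i t).

(* P1's strategy is to move, whenever possible, to a vertex of level at most 1.
   Then P1 always moves from a vertex v of level 0 or 2.  Every trail edge at v
   was traversed between v and a vertex of odd level at most 2, so the used
   neighbours of v form a subset U of the neighbours N of level at most 1.
   Parity of the trail degree gives odd #|U| = (v != set0), while #|N| is
   2n+1 for v = set0 and 2 for #|v| = 2; hence U <> N and P1 has a move to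
   level at most 1.  P2 moves from level at most 1, hence to level at most 2. *)
From mathcomp Require Import all_boot zify.
Set Implicit Arguments. Unset Strict Implicit. Unset Printing Implicit Defensive.

Section Hypercube.

Variable m : nat.
Implicit Types (X Y u v x : vertex m) (t : seq (vertex m)).

Lemma hadjC X Y : hadj X Y = hadj Y X.
Proof. by rewrite /hadj setUC. Qed.

Lemma hadjxx X : hadj X X = false.
Proof. by rewrite /hadj setDv setU0 cards0. Qed.

Lemma card_hadj X Y : hadj X Y -> #|X| + #|Y| = (2 * #|X :&: Y|).+1.
Proof.
move=> /eqP.
have disj : (X :\: Y) :&: (Y :\: X) = set0.
  by apply/setP=> x; rewrite !inE; case: (x \in X); case: (x \in Y).
rewrite cardsU disj cards0 subn0.
have := cardsID Y X; have := cardsID X Y; rewrite setIC; lia.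
Qed.

Lemma odd_card_hadj X Y : hadj X Y -> odd #|Y| = ~~ odd #|X|.
Proof.
move=> /card_hadj sumXY.
have : odd (#|X| + #|Y|) by rewrite sumXY /= mul2n odd_double.
by rewrite oddD; case: (odd #|X|); case: (odd #|Y|).
Qed.

Lemma hadj_card_le X Y : hadj X Y -> #|Y| <= #|X|.+1.
Proof.
move=> /card_hadj; have : #|X :&: Y| <= #|X| by rewrite subset_leq_card ?subsetIl.
lia.
Qed.

Lemma odd_card_last x t : path (@hadj m) x t ->
  odd #|last x t| = odd #|x| (+) odd (size t).
Proof.
elim: t x => [|y t IHt] x /=; first by rewrite addbF.
case/andP=> xy /IHt ->; rewrite (odd_card_hadj xy).
by case: (odd #|x|); case: (odd (size t)).
Qed.

Lemma hedgeC X Y : hedge X Y = hedge Y X.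
Proof. exact: setUC. Qed.

Lemma hedge_inj v : injective (@hedge m v).
Proof.
move=> u u' eq_e.
have : u \in hedge v u' by rewrite -eq_e !inE eqxx orbT.
have : u' \in hedge v u by rewrite eq_e !inE eqxx orbT.
rewrite !inE => /orP[/eqP->|/eqP-> //]; by case/orP=> /eqP.
Qed.

Lemma hedge_eq v u X Y :
  hedge v u = hedge X Y -> (v = X /\ u = Y) \/ (v = Y /\ u = X).
Proof.
rewrite /hedge => eq_e.
have : v \in [set X; Y] by rewrite -eq_e !inE eqxx.
have : u \in [set X; Y] by rewrite -eq_e !inE eqxx orbT.
have : X \in [set v; u] by rewrite eq_e !inE eqxx.
have : Y \in [set v; u] by rewrite eq_e !inE eqxx orbT.
rewrite !inE; do 4 case/orP=> /eqP ?; subst; auto.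
Qed.

Lemma mem_pairmap_hedge x t e :
  e \in pairmap (@hedge m) x t -> exists X Y, e = hedge X Y.
Proof.
elim: t x => [|y t IHt] x //=; rewrite inE => /orP[/eqP->|/IHt//].
by exists x, y.
Qed.

Definition trail_nbrs x v t : {set vertex m} :=
  [set u | hedge v u \in pairmap (@hedge m) x t].

Lemma card_trail_nbrs x v t : uniq (pairmap (@hedge m) x t) ->
  #|trail_nbrs x v t| = count (fun e : {set vertex m} => v \in e) (pairmap (@hedge m) x t).
Proof.
move=> uniq_t; rewrite -size_filter.
have /card_uniqP <- := filter_uniq (fun e : {set vertex m} => v \in e) uniq_t.
rewrite -(card_imset _ (@hedge_inj v)); apply: eq_card => e.
rewrite mem_filter; apply/imsetP/andP => [[u]|[ve te]].
  by rewrite inE => tu ->; rewrite !inE eqxx.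
have [X [Y eXY]] := mem_pairmap_hedge te; subst e.
move: ve; rewrite !inE => /orP[]/eqP vX; subst v; first by exists Y; rewrite ?inE.
by exists X; rewrite ?inE hedgeC.
Qed.

(* Each visit of v contributes 2 to its degree, except at the two ends. *)
Lemma count_hedge_path x v t : path (@hadj m) x t ->
  count (fun e : {set vertex m} => v \in e) (pairmap (@hedge m) x t) + (last x t == v)
  = (x == v) + 2 * count_mem v t.
Proof.
elim: t x => [|y t IHt] x /=; first by rewrite addn0.
case/andP=> xy /IHt; rewrite -addnA => ->.
have : x != y by apply: contraTneq xy => ->; rewrite hadjxx.
rewrite !inE (eq_sym v x) (eq_sym v y).
by case: (x =P v) => [->|_]; case: (y =P v) => [->|_]; rewrite ?eqxx //=; lia.
Qed.

Lemma odd_card_trail_nbrs x v t :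
  path (@hadj m) x t -> uniq (pairmap (@hedge m) x t) ->
  odd #|trail_nbrs x v t| = (x == v) (+) (last x t == v).
Proof.
move=> xt uniq_t; have := count_hedge_path v xt; rewrite -card_trail_nbrs //.
rewrite mul2n => /(congr1 odd); rewrite !oddD odd_double addbF.
by case: (last x t == v); case: (x == v); case: (odd _) => //= ->.
Qed.

Lemma trail_nbrsP x v t u : path (@hadj m) x t ->
  u \in trail_nbrs x v t -> hadj v u /\ u \in x :: t.
Proof.
rewrite inE; elim: t x => [|y t IHt] x //= /andP[xy yt].
rewrite inE => /orP[/eqP/hedge_eq[][-> ->]|/(IHt _ yt)[vu ut]].
- by rewrite !inE eqxx orbT.
- by rewrite hadjC xy !inE eqxx.
- by rewrite inE ut orbT.
Qed.

Definition low_nbrs v : {set vertex m} := [set u | hadj v u && (#|u| <= 1)].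

Lemma card_low_nbrs0 : #|low_nbrs set0| = m.
Proof.
rewrite -[RHS]bin1 -[m in 'C(m, 1)]card_ord -card_draws; apply: eq_card => u.
rewrite !inE /hadj set0D setD0 set0U; by case: eqP => // ->.
Qed.

Lemma hadj_set2_set1 (a b : 'I_m) : a != b -> hadj [set a; b] [set a].
Proof.
move=> ab; rewrite /hadj (_ : _ :\: _ :|: _ = [set b]) ?cards1 //.
apply/setP=> z; rewrite !inE.
by case: (z =P a) => [->|]; rewrite ?(negPf ab) ?eqxx //; case: (z == b); rewrite ?orbF.
Qed.

Lemma card_low_nbrs2 v : #|v| = 2 -> #|low_nbrs v| = 2.
Proof.
move=> v2; have /cards2P[a [b [ab ev]]] : #|v| == 2 by rewrite v2.
suff -> : low_nbrs v = [set [set a]; [set b]] by rewrite cards2 (inj_eq set1_inj) ab.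
apply/setP=> u; rewrite !inE; apply/andP/idP => [[vu u1]|].
  have := card_hadj vu; have : #|v :&: u| <= #|u| by rewrite subset_leq_card ?subsetIr.
  rewrite v2 => vu_u sum_vu.
  have /cards1P[y ey] : #|u| == 1 by lia.
  have /card_gt0P[z] : 0 < #|v :&: u| by lia.
  by rewrite ev ey !inE => /andP[/orP[]/eqP-> /eqP->]; rewrite eqxx ?orbT.
rewrite ev; case/orP=> /eqP->; rewrite cards1; split=> //; first exact: hadj_set2_set1.
by rewrite setUC hadj_set2_set1 // eq_sym.
Qed.

Lemma legal_play_rcons t w : legal_play (rcons t w) =
  [&& legal_play t, hadj (last set0 t) w &
      hedge (last set0 t) w \notin pairmap (@hedge m) set0 t].
Proof.
rewrite /legal_play rcons_path -cats1 pairmap_cat cat_uniq /= orbF andbT.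
by case: (path _ _ _); case: (hadj _ _); case: (uniq _); rewrite //= !andbF.
Qed.

Lemma exists_low_move t : odd m -> legal_play t -> ~~ odd (size t) ->
  {in t, forall X, #|X| <= 2} ->
  exists w, legal_play (rcons t w) && (#|w| <= 1).
Proof.
move=> odd_m legal_t even_t t_le2; have /andP[path_t uniq_t] := legal_t.
set v := last set0 t.
have visited_le2 X : X \in set0 :: t -> #|X| <= 2.
  by rewrite inE => /orP[/eqP->|/t_le2//]; rewrite cards0.
have even_v : odd #|v| = false by rewrite (odd_card_last path_t) cards0 (negPf even_t).
have used_low : trail_nbrs set0 v t \subset low_nbrs v.
  apply/subsetP=> u /(trail_nbrsP path_t)[vu /visited_le2 u2].
  rewrite inE vu /=; move: (odd_card_hadj vu); rewrite even_v /=.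
  by move: u2; case: #|u| => [|[|[|]]].
have odd_used : odd #|trail_nbrs set0 v t| = (v != set0).
  by rewrite odd_card_trail_nbrs // -/v eqxx addbT eq_sym.
have odd_low : odd #|low_nbrs v| = (v == set0).
  have [->|v0] := eqVneq v set0; first by rewrite card_low_nbrs0.
  suff /card_low_nbrs2-> : #|v| = 2 by [].
  have : #|v| != 0 by rewrite cards_eq0.
  have := visited_le2 v (mem_last _ _); move: even_v; case: #|v| => [|[|[|]]] //.
have : low_nbrs v != trail_nbrs set0 v t.
  by apply/eqP=> eq_low; move: odd_low; rewrite eq_low odd_used; case: (v == set0).
rewrite eqEsubset used_low andbT => /subsetPn[w]; rewrite !inE => /andP[vw w1] unused.
by exists w; rewrite legal_play_rcons legal_t vw unused w1.
Qed.

Lemma path_card_le2 t : path (@hadj m) set0 t ->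
  (forall i, i < size t -> ~~ odd i -> #|nth set0 t i| <= 1) ->
  {in t, forall X, #|X| <= 2}.
Proof.
move=> path_t even_le1 X /(nthP set0)[i lt_i <-].
have [odd_i|/(even_le1 _ lt_i)/leq_trans-> //] := boolP (odd i).
case: i odd_i lt_i => [|j] //= odd_j lt_j.
apply: leq_trans (hadj_card_le ((pathP set0 path_t) j.+1 lt_j)) _.
exact: even_le1 j (ltnW lt_j) odd_j.
Qed.

Lemma follows_rcons (s : strategy m) t w : follows s (rcons t w) ->
  follows s t /\ (~~ odd (size t) -> w = s t).
Proof.
move=> f_tw; split=> [i lt_i even_i|even_t].
  have := f_tw i; rewrite size_rcons nth_rcons lt_i -cats1 take_cat lt_i.
  exact: (fun f => f (ltnW lt_i) even_i).
have := f_tw (size t); rewrite size_rcons nth_rcons ltnn eqxx -cats1.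
by rewrite take_cat ltnn subnn take0 cats0; apply.
Qed.

Definition low_strategy : strategy m := fun t =>
  if [pick w | legal_play (rcons t w) && (#|w| <= 1)] is Some w then w
  else if [pick w | legal_play (rcons t w)] is Some w then w else set0.

Lemma low_strategy_valid : valid_strategy low_strategy.
Proof.
move=> t _ _ [w legal_w]; rewrite /low_strategy.
case: pickP => [w' /andP[] //|_]; case: pickP => // no_move.
by rewrite no_move in legal_w.
Qed.

Lemma low_strategy_card t :
  (exists w, legal_play (rcons t w) && (#|w| <= 1)) -> #|low_strategy t| <= 1.
Proof.
case=> w low_w; rewrite /low_strategy; case: pickP => [w' /andP[] //|no_move].
by rewrite no_move in low_w.
Qed.

Lemma low_strategy_even_card t : odd m -> legal_play t -> follows low_strategy t ->
  forall i, i < size t -> ~~ odd i -> #|nth set0 t i| <= 1.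
Proof.
move=> odd_m; elim/last_ind: t => [//|t w IHt].
rewrite legal_play_rcons => /and3P[legal_t _ _] /follows_rcons[f_t w_s] i.
have IH := IHt legal_t f_t.
rewrite size_rcons ltnS leq_eqVlt nth_rcons => /orP[/eqP->|lt_i] even_i.
  rewrite ltnn eqxx (w_s even_i); apply/low_strategy_card/exists_low_move => //.
  by case/andP: legal_t => path_t _; apply: path_card_le2.
by rewrite lt_i; apply: IH.
Qed.

End Hypercube.

Theorem mainTheorem1 (n : nat) :
  exists s : strategy (2 * n + 1),
    valid_strategy s /\
    forall t : seq (vertex (2 * n + 1)),
      legal_play t -> follows s t ->
      forall X, X \in t -> #|X| <= 2.
Proof.
have odd_m : odd (2 * n + 1) by rewrite addn1 /= mul2n odd_double.
exists (@low_strategy _); split; first exact: low_strategy_valid.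
move=> t legal_t f_t; case/andP: (legal_t) => path_t _.
exact: path_card_le2 path_t (low_strategy_even_card odd_m legal_t f_t).
Qed.
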